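(* For every positive integer $k$, there exist a binary matrix $A_k$ and binary column vectors $x_1,\dots,x_k$ such that $R_{binary}(A_k|x_i)=R_{binary}(A_k)=4$ for all $1\le i\le k$, but $R_{binary}(A_k|x_1,\dots,x_k)=k+3$.
   Context: For a binary $n\times m$ matrix $A$, $R_{binary}(A)$ is the least $k$ such that $A=UV$ with $U\in\{0,1\}^{n\times k}$, $V\in\{0,1\}^{k\times m}$, ordinary arithmetic. $(A|x_1,\dots,x_t)$ denotes $A$ with the columns $x_1,\dots,x_t$ appended on the right. *)

(* Binary matrices are 'M[nat]_(n,m) whose entries are 0 or 1;
   products are computed in ordinary (nat) arithmetic. *)
From mathcomp Require Import all_boot all_order all_algebra.
Set Implicit Arguments. Unset Strict Implicit. Unset Printing Implicit Defensive.

Definition binary_mx (n m : nat) (A : 'M[nat]_(n, m)) : Prop :=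
  forall i j, A i j <= 1.

Definition binary_factorizable (n m : nat) (A : 'M[nat]_(n, m)) (k : nat) : Prop :=
  exists (U : 'M[nat]_(n, k)) (V : 'M[nat]_(k, m)),
    binary_mx U /\ binary_mx V /\
    forall i j, A i j = \sum_(l < k) U i l * V l j.

Definition binary_rank_is (n m : nat) (A : 'M[nat]_(n, m)) (r : nat) : Prop :=
  binary_factorizable A r /\ forall k, k < r -> ~ binary_factorizable A k.

From mathcomp Require Import all_boot all_order all_algebra.
Import GRing.Theory.
Set Implicit Arguments. Unset Strict Implicit. Unset Printing Implicit Defensive.

(* A stacks the 4-cycle matrix (row i has ones in columns i and i+1 mod 4)
   on top of k all-ones rows, and x_t has ones in row 0 and in the t-th
   all-ones row.  Lower bounds come from fooling sets: the diagonal of the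
   4-cycle for A and (A|x_t), and the diagonal entries (i, i), 1 <= i <= k+3,
   for (A|x_1,...,x_k).  For the upper bounds, (A|x_t) has an explicit
   factorization with 4 terms, and binary rank is subadditive under column
   concatenation, so R(A|x_1,...,x_k) <= R(A|x_1) + (k-1). *)

Lemma binary_factorizableE n m (M : 'M[nat]_(n, m)) r :
  binary_factorizable M r <->
  exists (U : 'M[nat]_(n, r)) (V : 'M[nat]_(r, m)),
    [/\ binary_mx U, binary_mx V & M = (U *m V)%R].
Proof.
split=> [[U [V [bU [bV eM]]]] | [U [V [bU bV ->]]]]; exists U, V.
  by split=> //; apply/matrixP=> i j; rewrite eM mxE.
by do 2!split=> //; move=> i j; rewrite mxE.
Qed.

Lemma binary_mx_row_mx n m1 m2 (A : 'M[nat]_(n, m1)) (B : 'M[nat]_(n, m2)) :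
  binary_mx A -> binary_mx B -> binary_mx (row_mx A B).
Proof. by move=> bA bB i j; rewrite mxE; case: splitP. Qed.

Lemma binary_mx_col_mx n1 n2 m (A : 'M[nat]_(n1, m)) (B : 'M[nat]_(n2, m)) :
  binary_mx A -> binary_mx B -> binary_mx (col_mx A B).
Proof. by move=> bA bB i j; rewrite mxE; case: splitP. Qed.

Lemma binary_mx0 n m : binary_mx (0 : 'M[nat]_(n, m))%R.
Proof. by move=> i j; rewrite mxE. Qed.

Lemma binary_factorizable_row_mxl n m1 m2 (A : 'M[nat]_(n, m1)) (B : 'M[nat]_(n, m2)) r :
  binary_factorizable (row_mx A B) r -> binary_factorizable A r.
Proof.
move=> /binary_factorizableE[U [V [bU bV eAB]]]; apply/binary_factorizableE.
exists U, (lsubmx V); split=> //; first by move=> i j; rewrite mxE.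
by rewrite mulmx_lsub -eAB row_mxKl.
Qed.

Lemma binary_factorizable_row_mx n m1 m2 (A : 'M[nat]_(n, m1)) (B : 'M[nat]_(n, m2)) r1 r2 :
  binary_factorizable A r1 -> binary_factorizable B r2 ->
  binary_factorizable (row_mx A B) (r1 + r2).
Proof.
move=> /binary_factorizableE[UA [VA [bUA bVA ->]]] /binary_factorizableE[UB [VB [bUB bVB ->]]].
apply/binary_factorizableE; exists (row_mx UA UB), (block_mx VA 0 0 VB)%R; split.
- exact: binary_mx_row_mx.
- by apply: binary_mx_col_mx; apply: binary_mx_row_mx => //; apply: binary_mx0.
- by rewrite mul_row_block !mulmx0 addr0 add0r.
Qed.

Lemma binary_factorizable_width n m (B : 'M[nat]_(n, m)) :
  binary_mx B -> binary_factorizable B m.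
Proof.
move=> bB; apply/binary_factorizableE; exists B, 1%:M%R; split; rewrite ?mulmx1 //.
by move=> i j; rewrite mxE; case: eqP.
Qed.

Lemma binary_factorizable_castmx n m m' (e : m = m') (M : 'M[nat]_(n, m)) r :
  binary_factorizable (castmx (erefl n, e) M) r <-> binary_factorizable M r.
Proof. by case: m' / e; rewrite castmx_id. Qed.

Definition fooling_set n m p (M : 'M[nat]_(n, m)) (fr : 'I_p -> 'I_n) (fc : 'I_p -> 'I_m) : Prop :=
  (forall t, 0 < M (fr t) (fc t)) /\
  (forall t t', t != t' -> M (fr t) (fc t') * M (fr t') (fc t) = 0).

Lemma fooling_set_leq n m r p (M : 'M[nat]_(n, m)) (U : 'M[nat]_(n, r)) (V : 'M[nat]_(r, m)) fr fc :
  M = (U *m V)%R -> @fooling_set n m p M fr fc -> p <= r.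
Proof.
move=> eM [pos zero].
have sumE i j : M i j = \sum_(l < r) U i l * V l j by rewrite eM mxE.
have termP i j l : 0 < U i l * V l j -> 0 < M i j.
  by move=> lt0; rewrite sumE (bigD1 l) //=; exact: leq_trans lt0 (leq_addr _ _).
have witness t : exists l, 0 < U (fr t) l * V l (fc t).
  have := pos t; rewrite sumE lt0n sum_nat_eq0.
  by move/forallPn=> [l nz]; exists l; rewrite lt0n.
have [g gP] := fin_all_exists witness.
(* Distinct fooling positions cannot share a rank-one term. *)
suff /leq_card : injective g by rewrite !card_ord.
move=> t t' eg; apply/eqP; apply: contraT => /zero/eqP.
have := gP t; have := gP t'; rewrite !muln_gt0 -eg => /andP[u' v'] /andP[u v].
by rewrite muln_eq0 !eqn0Ngt !(termP _ _ (g t)) ?muln_gt0 ?u ?v ?u' ?v'.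
Qed.

Lemma fooling_set_row_mxl n m1 m2 p (A : 'M[nat]_(n, m1)) (B : 'M[nat]_(n, m2)) fr fc :
  @fooling_set n m1 p A fr fc -> fooling_set (row_mx A B) fr (fun t => lshift m2 (fc t)).
Proof. by case=> pos zero; split=> [t | t t' /zero]; rewrite !row_mxEl. Qed.

Lemma binary_rank_is_fooling n m p (M : 'M[nat]_(n, m)) fr fc :
  binary_factorizable M p -> @fooling_set n m p M fr fc -> binary_rank_is M p.
Proof.
move=> fM fool; split=> // r lt_rp /binary_factorizableE[U [V [_ _ /fooling_set_leq]]].
by move/(_ _ _ _ fool); rewrite leqNgt lt_rp.
Qed.

Definition bool_mx n m (f : nat -> nat -> bool) : 'M[nat]_(n, m) :=
  \matrix_(i < n, j < m) nat_of_bool (f i j).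

Lemma bool_mxE n m f (i : 'I_n) (j : 'I_m) : bool_mx n m f i j = f i j.
Proof. by rewrite mxE. Qed.

Lemma bool_mx_binary n m f : binary_mx (bool_mx n m f).
Proof. by move=> i j; rewrite bool_mxE leq_b1. Qed.

Lemma row_mx_bool_mxE n m1 m2 f g (i : 'I_n) (j : 'I_(m1 + m2)) :
  row_mx (bool_mx n m1 f) (bool_mx n m2 g) i j = (if j < m1 then f i j else g i (j - m1)).
Proof.
by rewrite mxE; case: splitP => j' ->; rewrite bool_mxE ?ltn_ord // addKn.
Qed.

Lemma col_bool_mx n m f (t : 'I_m) : col t (bool_mx n m f) = bool_mx n 1 (fun i _ => f i t).
Proof. by apply/matrixP=> i j; rewrite !mxE. Qed.

Definition a_entry (i j : nat) : bool := if i < 4 then (j == i) || (j == i.+1 %% 4) else true.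
Definition x_entry (i t : nat) : bool := (i == 0) || (i == t + 4).
Definition ax_entry (i j : nat) : bool := if j < 4 then a_entry i j else x_entry i (j - 4).

Definition Amx k : 'M[nat]_(4 + k, 4) := bool_mx _ _ a_entry.
Definition Xmx k : 'M[nat]_(4 + k, k) := bool_mx _ _ x_entry.

Lemma a_entry_refl a : a_entry a a.
Proof. by rewrite /a_entry eqxx if_same. Qed.

Lemma a_entry_asym a b : a < 4 -> b < 4 -> a != b -> a_entry a b && a_entry b a = false.
Proof. by case: a => [|[|[|[|a]]]]; case: b => [|[|[|[|b]]]]. Qed.

Lemma ax_entry_refl a : ax_entry a a.
Proof. by rewrite /ax_entry a_entry_refl /x_entry; case: ltnP => // /subnK ->; rewrite eqxx orbT. Qed.

Lemma ax_entry_asym a b : 0 < a -> 0 < b -> a != b -> ax_entry a b && ax_entry b a = false.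
Proof.
case: a => [|[|[|[|a]]]] //= _; case: b => [|[|[|[|b]]]] //= _;
  rewrite /ax_entry /x_entry /= ?subSS ?subn0 ?addn4 //.
by move/negbTE ->.
Qed.

Lemma Amx_fooling k : fooling_set (Amx k) (lshift k) id.
Proof.
split=> [t | t t' neq_tt']; rewrite !bool_mxE /= ?a_entry_refl //.
by rewrite mulnb a_entry_asym.
Qed.

Lemma Amx_XmxE k i j : row_mx (Amx k) (Xmx k) i j = ax_entry i j.
Proof. exact: row_mx_bool_mxE. Qed.

Lemma Amx_Xmx_fooling k : fooling_set (row_mx (Amx k) (Xmx k)) (lift ord0) (lift ord0).
Proof.
split=> [s | s s' neq_ss']; rewrite !Amx_XmxE ?ax_entry_refl //.
by rewrite mulnb !lift0 ax_entry_asym.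
Qed.

(* The rows of V are those of the 4-cycle, the first one extended by a 1 in
   the column x_t; the all-ones row meeting x_t is v_0 + v_2, the other
   all-ones rows are v_1 + v_3. *)
Definition u_entry t i l : bool := if i < 4 then l == i else if i == t + 4 then ~~ odd l else odd l.
Definition v_entry l j : bool := if j < 4 then a_entry l j else l == 0.

Lemma Amx_col_factorizable k (t : 'I_k) : binary_factorizable (row_mx (Amx k) (col t (Xmx k))) 4.
Proof.
exists (bool_mx _ _ (u_entry t)), (bool_mx _ _ v_entry).
split; [exact: bool_mx_binary | split; [exact: bool_mx_binary | move=> i j]].
rewrite /Xmx col_bool_mx row_mx_bool_mxE !big_ord_recl big_ord0 !bool_mxE /=.
case: i j => [i _] [[|[|[|[|[|j]]]]] //= _]; rewrite /u_entry /v_entry /a_entry /x_entry addn4.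
all: case: i => [|[|[|[|i]]]] //=; rewrite ?eqSS; case: eqP => //= _.
Qed.

Lemma Amx_Xmx_factorizable k : 0 < k -> binary_factorizable (row_mx (Amx k) (Xmx k)) (3 + k).
Proof.
case: k => // k _; pose X : 'M[nat]_(4 + k.+1, 1 + k) := Xmx k.+1.
have -> : row_mx (Amx k.+1) (Xmx k.+1) =
    castmx (erefl, esym (addnA 4 1 k)) (row_mx (row_mx (Amx k.+1) (lsubmx X)) (rsubmx X)).
  by rewrite -row_mxA hsubmxK.
apply/binary_factorizable_castmx/(binary_factorizable_row_mx (r1 := 4)).
- have -> : lsubmx X = col ord0 (Xmx k.+1) by apply/matrixP=> i j; rewrite !mxE (ord1 j).
  exact: Amx_col_factorizable.
- by apply: binary_factorizable_width => i j; rewrite mxE bool_mx_binary.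
Qed.

Theorem theorem5 :
  forall k : nat, 0 < k ->
  exists (n m : nat) (A : 'M[nat]_(n, m)) (X : 'M[nat]_(n, k)),
    [/\ binary_mx A, binary_mx X,
        binary_rank_is A 4,
        (forall i : 'I_k, binary_rank_is (row_mx A (col i X)) 4)
      & binary_rank_is (row_mx A X) (k + 3)].
Proof.
move=> k k_gt0; exists (4 + k), 4, (Amx k), (Xmx k); split; try exact: bool_mx_binary.
- apply: binary_rank_is_fooling (Amx_fooling k).
  exact: binary_factorizable_row_mxl (Amx_col_factorizable (Ordinal k_gt0)).
- move=> t; apply: binary_rank_is_fooling (Amx_col_factorizable t) _.
  exact: fooling_set_row_mxl (Amx_fooling k).
- rewrite [k + 3]addnC; exact: binary_rank_is_fooling (Amx_Xmx_factorizable k_gt0) (Amx_Xmx_fooling k).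
Qed.
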